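(* Let $T$ be a triangle, $j\ge0$ an integer, and $v=\{v_0,v_b\}$ with $v_0\in P_j(T)$ and $v_b\in P_{j+1}(\partial T)$. Let $\nabla_{d,j+1}v\in[P_{j+1}(T)]^2$ be the discrete weak gradient of $v$ defined with $V(T)=[P_{j+1}(T)]^2$. Then $\nabla_{d,j+1}v=0$ on $T$ if and only if $v$ is constant, i.e. $v_0=v_b=$ the same constant.
   Context: $P_j(T)$ denotes polynomials of degree $\le j$ on $T$; $P_{j+1}(\partial T)$ denotes functions on $\partial T$ whose restriction to each edge of $T$ is a polynomial of degree $\le j+1$. The discrete weak gradient $\nabla_{d,j+1}v$ is the unique element of $[P_{j+1}(T)]^2$ with $\int_T\nabla_{d,j+1}v\cdot q\,dT=-\int_Tv_0\,\nabla\cdot q\,dT+\int_{\partial T}v_b\,q\cdot\mathbf{n}\,ds$ for all $q\in[P_{j+1}(T)]^2$, where $\mathbf{n}$ is the outward unit normal to $\partial T$. *)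

From Stdlib Require Import Reals.
From Coquelicot Require Import Coquelicot.
Open Scope R_scope.

Definition pt := (R * R)%type.

Definition det2 (u v : pt) : R := fst u * snd v - snd u * fst v.
Definition psub (p q : pt) : pt := (fst p - fst q, snd p - snd q).

Definition lerp (p q : pt) (t : R) : pt :=
  (fst p + t * (fst q - fst p), snd p + t * (snd q - snd p)).

Definition tri_pt (a b c : pt) (s t : R) : pt :=
  (fst a + s * (fst b - fst a) + t * (fst c - fst a),
   snd a + s * (snd b - snd a) + t * (snd c - snd a)).

Definition nondegenerate (a b c : pt) : Prop := det2 (psub b a) (psub c a) <> 0.

Definition in_tri (a b c : pt) (x : pt) : Prop :=
  exists s t, 0 <= s /\ 0 <= t /\ s + t <= 1 /\ x = tri_pt a b c s t.

Definition on_seg (p q : pt) (x : pt) : Prop :=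
  exists t, 0 <= t <= 1 /\ x = lerp p q t.

Definition on_bdry (a b c : pt) (x : pt) : Prop :=
  on_seg a b x \/ on_seg b c x \/ on_seg c a x.

Definition poly2 (j : nat) (f : R -> R -> R) : Prop :=
  exists cf : nat -> nat -> R, forall x y,
    f x y = sum_f_R0 (fun k => sum_f_R0 (fun l =>
              if (k + l <=? j)%nat then cf k l * x ^ k * y ^ l else 0) j) j.

Definition poly1_on01 (n : nat) (g : R -> R) : Prop :=
  exists cf : nat -> R, forall t, 0 <= t <= 1 ->
    g t = sum_f_R0 (fun k => cf k * t ^ k) n.

Definition edge_poly (n : nat) (vb : R -> R -> R) (p q : pt) : Prop :=
  poly1_on01 n (fun t => vb (fst (lerp p q t)) (snd (lerp p q t))).

Definition bdry_poly (n : nat) (vb : R -> R -> R) (a b c : pt) : Prop :=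
  edge_poly n vb a b /\ edge_poly n vb b c /\ edge_poly n vb c a.

(* integral over T via the affine parametrization (change of variables) *)
Definition tri_int (a b c : pt) (f : R -> R -> R) : R :=
  Rabs (det2 (psub b a) (psub c a)) *
  RInt (fun s => RInt (fun t => f (fst (tri_pt a b c s t)) (snd (tri_pt a b c s t)))
                      0 (1 - s)) 0 1.

Definition seg_len (p q : pt) : R :=
  sqrt ((fst q - fst p) ^ 2 + (snd q - snd p) ^ 2).

(* line integral (w.r.t. arclength ds) over the edge [p,q] *)
Definition seg_int (p q : pt) (g : R -> R -> R) : R :=
  seg_len p q * RInt (fun t => g (fst (lerp p q t)) (snd (lerp p q t))) 0 1.

(* outward unit normal of the edge [p,q] of the triangle whose third vertex is r *)
Definition out_normal (p q r : pt) : pt :=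
  let m := (snd q - snd p, fst p - fst q) in
  let sg := if Rlt_dec 0 (fst m * (fst r - fst p) + snd m * (snd r - snd p))
            then -1 else 1 in
  (sg * fst m / seg_len p q, sg * snd m / seg_len p q).

Definition edge_flux (p q r : pt) (vb q1 q2 : R -> R -> R) : R :=
  let n := out_normal p q r in
  seg_int p q (fun x y => vb x y * (q1 x y * fst n + q2 x y * snd n)).

Definition bdry_flux (a b c : pt) (vb q1 q2 : R -> R -> R) : R :=
  edge_flux a b c vb q1 q2 + edge_flux b c a vb q1 q2 + edge_flux c a b vb q1 q2.

Definition div2 (q1 q2 : R -> R -> R) (x y : R) : R :=
  Derive (fun x' => q1 x' y) x + Derive (fun y' => q2 x y') y.

Definition is_weak_grad (j : nat) (a b c : pt) (v0 vb w1 w2 : R -> R -> R) : Prop :=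
  poly2 (S j) w1 /\ poly2 (S j) w2 /\
  forall q1 q2 : R -> R -> R, poly2 (S j) q1 -> poly2 (S j) q2 ->
    tri_int a b c (fun x y => w1 x y * q1 x y + w2 x y * q2 x y)
    = - tri_int a b c (fun x y => v0 x y * div2 q1 q2 x y)
      + bdry_flux a b c vb q1 q2.

From Stdlib Require Import Reals Lra Lia List.
From Coquelicot Require Import Coquelicot.
Import ListNotations.
Open Scope R_scope.

(* Pull everything back to the reference triangle {s, t >= 0, s + t <= 1} by the affine map
   (s, t) |-> a + s (b - a) + t (c - a).  Testing the definition of the weak gradient with
   q = P e, where deg P <= j + 1 and e = α (b - a) + β (c - a), gives, in reference
   coordinates,
     ∫ (w.e) P + ∫ v0 ∂_(α,β) P = (α + β) ∫_bc vb P - β ∫_ab vb P - α ∫_ca vb P.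
   If v0 = vb = C, the divergence theorem makes the last two terms cancel, and P = w.e
   shows w.e = 0 for two independent directions e.
   If w = 0, integrating ∫ v0 ∂P by parts leaves ∫ (∂ v0) P equal to edge moments of the
   jumps v0 - vb.  The test functions t (1 - s - t) ∂t v0 and s (1 - s - t) ∂s v0 have
   degree j + 1 and vanish on the edges that occur, so ∇ v0 = 0 and v0 is constant; the
   remaining identities say that the three jumps have equal moments against all P of
   degree j + 1, which forces them to vanish. *)

(** * Polynomials in two variables *)

Definition mono : Type := R * nat * nat.
Definition bipoly : Type := list mono.

Fixpoint peval (p : bipoly) (s t : R) : R :=
  match p with
  | [] => 0
  | (c, k, l) :: p' => c * s ^ k * t ^ l + peval p' s t
  end.

Definition deg_le (n : nat) (p : bipoly) : Prop :=
  forall c k l, In (c, k, l) p -> (k + l <= n)%nat.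

Lemma deg_le_nil n : deg_le n [].
Proof. intros c k l []. Qed.

Lemma deg_le_cons n c k l p :
  (k + l <= n)%nat -> deg_le n p -> deg_le n ((c, k, l) :: p).
Proof. intros Hkl Hp c' k' l' [E | Hin]; [injection E; intros; subst; exact Hkl | eauto]. Qed.

Lemma deg_le_tail n m p : deg_le n (m :: p) -> deg_le n p.
Proof. intros H c k l Hin. apply (H c k l); right; exact Hin. Qed.

Lemma deg_le_weaken m n p : (m <= n)%nat -> deg_le m p -> deg_le n p.
Proof. intros Hmn Hp c k l Hin. specialize (Hp c k l Hin). lia. Qed.

Lemma deg_le_app n p q : deg_le n p -> deg_le n q -> deg_le n (p ++ q).
Proof. intros Hp Hq c k l Hin. apply in_app_or in Hin as [Hin | Hin]; eauto. Qed.

Lemma peval_app p q s t : peval (p ++ q) s t = peval p s t + peval q s t.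
Proof. induction p as [|[[c k] l] p IH]; simpl; [ring | rewrite IH; ring]. Qed.

Definition pscale (r : R) (p : bipoly) : bipoly :=
  map (fun '(c, k, l) => (r * c, k, l)) p.

Lemma peval_scale r p s t : peval (pscale r p) s t = r * peval p s t.
Proof. induction p as [|[[c k] l] p IH]; simpl; [ring | rewrite IH; ring]. Qed.

Lemma deg_le_scale n r p : deg_le n p -> deg_le n (pscale r p).
Proof.
  intros Hp c k l Hin. apply in_map_iff in Hin as [[[c' k'] l'] [E Hin]].
  injection E; intros; subst. eauto.
Qed.

Definition pminus (p q : bipoly) : bipoly := p ++ pscale (-1) q.

Lemma peval_pminus p q s t : peval (pminus p q) s t = peval p s t - peval q s t.
Proof. unfold pminus. rewrite peval_app, peval_scale. ring. Qed.

Lemma deg_le_pminus n p q : deg_le n p -> deg_le n q -> deg_le n (pminus p q).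
Proof. intros Hp Hq. apply deg_le_app; [exact Hp | apply deg_le_scale, Hq]. Qed.

Definition pmul (p q : bipoly) : bipoly :=
  flat_map (fun '(c, k, l) => map (fun '(c', k', l') => (c * c', (k + k')%nat, (l + l')%nat)) q) p.

Lemma peval_mul p q s t : peval (pmul p q) s t = peval p s t * peval q s t.
Proof.
  induction p as [|[[c k] l] p IH]; simpl; [ring |].
  fold (pmul p q). rewrite peval_app, IH.
  enough (E : peval (map (fun '(c', k', l') => (c * c', (k + k')%nat, (l + l')%nat)) q) s t
              = c * s ^ k * t ^ l * peval q s t) by (rewrite E; ring).
  clear IH; induction q as [|[[c' k'] l'] q IHq]; simpl; [ring |].
  rewrite IHq, !pow_add; ring.
Qed.

Lemma deg_le_mul m n p q : deg_le m p -> deg_le n q -> deg_le (m + n) (pmul p q).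
Proof.
  intros Hp Hq c k l Hin. apply in_flat_map in Hin as [[[c1 k1] l1] [H1 H2]].
  apply in_map_iff in H2 as [[[c2 k2] l2] [E H2]]. injection E; intros; subst.
  specialize (Hp _ _ _ H1); specialize (Hq _ _ _ H2); lia.
Qed.

Fixpoint ppow (p : bipoly) (k : nat) : bipoly :=
  match k with O => [(1, O, O)] | S k' => pmul p (ppow p k') end.

Lemma peval_pow p k s t : peval (ppow p k) s t = peval p s t ^ k.
Proof. induction k; simpl; [ring | rewrite peval_mul, IHk; ring]. Qed.

Lemma deg_le_pow p k : deg_le 1 p -> deg_le k (ppow p k).
Proof.
  intros Hp; induction k; simpl.
  - apply deg_le_cons; [lia | apply deg_le_nil].
  - apply (deg_le_mul 1 k); assumption.
Qed.

Definition pcomp (p A B : bipoly) : bipoly :=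
  flat_map (fun '(c, k, l) => pscale c (pmul (ppow A k) (ppow B l))) p.

Lemma peval_comp p A B s t : peval (pcomp p A B) s t = peval p (peval A s t) (peval B s t).
Proof.
  induction p as [|[[c k] l] p IH]; simpl; [ring |].
  fold (pcomp p A B). rewrite peval_app, peval_scale, peval_mul, !peval_pow, IH; ring.
Qed.

Lemma deg_le_comp n p A B : deg_le n p -> deg_le 1 A -> deg_le 1 B -> deg_le n (pcomp p A B).
Proof.
  intros Hp HA HB c k l Hin. apply in_flat_map in Hin as [[[c1 k1] l1] [H1 H2]].
  apply (deg_le_scale _ c1 _ (deg_le_mul _ _ _ _ (deg_le_pow A k1 HA) (deg_le_pow B l1 HB))) in H2.
  specialize (Hp _ _ _ H1). lia.
Qed.

Definition affine (c0 c1 c2 : R) : bipoly := [(c0, O, O); (c1, 1%nat, O); (c2, O, 1%nat)].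

Lemma peval_affine c0 c1 c2 s t : peval (affine c0 c1 c2) s t = c0 + c1 * s + c2 * t.
Proof. simpl; ring. Qed.

Lemma deg_le_affine c0 c1 c2 : deg_le 1 (affine c0 c1 c2).
Proof. repeat apply deg_le_cons; try lia. apply deg_le_nil. Qed.

Fixpoint psum (g : nat -> bipoly) (n : nat) : bipoly :=
  match n with O => g O | S n' => psum g n' ++ g (S n') end.

Lemma peval_sum g n s t : peval (psum g n) s t = sum_f_R0 (fun i => peval (g i) s t) n.
Proof. induction n; simpl; [reflexivity | rewrite peval_app, IHn; reflexivity]. Qed.

Lemma deg_le_sum m g n : (forall i, (i <= n)%nat -> deg_le m (g i)) -> deg_le m (psum g n).
Proof. induction n; intros H; simpl; auto using deg_le_app. Qed.

(** * Derivatives *)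

Definition pds (p : bipoly) : bipoly :=
  map (fun '(c, k, l) => match k with O => (0, O, O) | S k' => (c * INR k, k', l) end) p.
Definition pdt (p : bipoly) : bipoly :=
  map (fun '(c, k, l) => match l with O => (0, O, O) | S l' => (c * INR l, k, l') end) p.

Definition pdir (α β : R) (p : bipoly) : bipoly := pscale α (pds p) ++ pscale β (pdt p).

Definition pint (p : bipoly) : bipoly := map (fun '(c, k, l) => (c / INR (S l), k, S l)) p.

Lemma peval_pdir α β p s t :
  peval (pdir α β p) s t = α * peval (pds p) s t + β * peval (pdt p) s t.
Proof. unfold pdir. rewrite peval_app, !peval_scale. reflexivity. Qed.

Lemma deg_le_pdir n α β p : deg_le (S n) p -> deg_le n (pdir α β p).
Proof.
  intros Hp. apply deg_le_app; apply deg_le_scale; intros c k l Hin;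
    apply in_map_iff in Hin as [[[c' k'] l'] [E Hin]]; specialize (Hp _ _ _ Hin);
    [destruct k' | destruct l']; injection E; intros; subst; lia.
Qed.

Lemma peval_pdir_const α β p s t : deg_le 0 p -> peval (pdir α β p) s t = 0.
Proof.
  intros Hp. rewrite peval_pdir.
  induction p as [|[[c k] l] p IH]; simpl; [ring |].
  assert (Hkl : (k + l <= 0)%nat) by (apply (Hp c); left; reflexivity).
  destruct k; [destruct l |]; try lia. simpl in IH |- *.
  transitivity (α * peval (pds p) s t + β * peval (pdt p) s t);
    [ring | exact (IH (deg_le_tail _ _ _ Hp))].
Qed.

Lemma is_derive_peval_line p s0 u t0 v x :
  is_derive (fun h => peval p (s0 + h * u) (t0 + h * v)) x
    (peval (pdir u v p) (s0 + x * u) (t0 + x * v)).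
Proof.
  rewrite peval_pdir.
  assert (Hlin : forall a w, is_derive (fun h => a + h * w) x w)
    by (intros; auto_derive; [exact I | ring]).
  induction p as [|[[c k] l] p IH]; simpl.
  - auto_derive; [exact I | ring].
  - evar (d : R); replace (u * _ + v * _) with d.
    + apply (is_derive_plus (fun h => c * (s0 + h * u) ^ k * (t0 + h * v) ^ l)); [| exact IH].
      apply (is_derive_mult (fun h => c * (s0 + h * u) ^ k)); [| | intros; apply Rmult_comm].
      * apply (is_derive_mult (fun _ => c)); [apply is_derive_const | | intros; apply Rmult_comm].
        apply is_derive_pow, Hlin.
      * apply is_derive_pow, Hlin.
    + unfold d, plus, mult, zero. fold (pds p) (pdt p).
      destruct k as [|k]; destruct l as [|l]; cbn -[INR]; rewrite ?INR_0; ring.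
Qed.

Lemma continuous_peval p (f g : R -> R) x :
  continuous f x -> continuous g x -> continuous (fun u => peval p (f u) (g u)) x.
Proof.
  intros Hf Hg. induction p as [|[[c k] l] p IH]; simpl; [apply continuous_const |].
  apply (continuous_plus (fun u => c * f u ^ k * g u ^ l)); [| exact IH].
  assert (Hpow : forall h n, continuous h x -> continuous (fun u => h u ^ n) x).
  { intros h n Hh; induction n; simpl; [apply continuous_const |].
    apply (continuous_mult h); assumption. }
  apply (continuous_mult (fun u => c * f u ^ k)); [apply (continuous_mult (fun _ => c)) |];
    auto using continuous_const.
Qed.

Ltac cont := repeat match goal with
  | |- continuous (fun u => ?c) _ => apply continuous_const
  | |- continuous (fun u => u) _ => apply continuous_id
  | |- continuous (fun u => @?F u + @?G u) _ => apply (continuous_plus F G)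
  | |- continuous (fun u => @?F u - @?G u) _ => apply (continuous_minus F G)
  | |- continuous (fun u => @?F u * @?G u) _ => apply (continuous_mult F G)
  | |- continuous (fun u => peval ?p (@?F u) (@?G u)) _ => apply (continuous_peval p F G)
  end.

Lemma ex_RInt_cont (f : R -> R) a b : (forall x, continuous f x) -> ex_RInt f a b.
Proof. intros Hf. apply (ex_RInt_continuous (V := R_CompleteNormedModule)). intros; apply Hf. Qed.

Lemma RInt_peval_line p s0 u t0 v a b :
  RInt (fun h => peval (pdir u v p) (s0 + h * u) (t0 + h * v)) a b
  = peval p (s0 + b * u) (t0 + b * v) - peval p (s0 + a * u) (t0 + a * v).
Proof.
  apply is_RInt_unique, (is_RInt_derive (fun h => peval p (s0 + h * u) (t0 + h * v))).
  - intros; apply is_derive_peval_line.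
  - intros; cont.
Qed.

Lemma peval_pdir_mul α β p q s t :
  peval (pdir α β (pmul p q)) s t
  = peval (pdir α β p) s t * peval q s t + peval p s t * peval (pdir α β q) s t.
Proof.
  set (line := fun r h => peval r (s + h * α) (t + h * β)).
  assert (Hprod := is_derive_mult (line p) (line q) 0 _ _
    (is_derive_peval_line p s α t β 0) (is_derive_peval_line q s α t β 0)
    (fun _ _ => Rmult_comm _ _)).
  assert (Hmul := is_derive_peval_line (pmul p q) s α t β 0).
  apply (is_derive_ext _ (fun h => line p h * line q h)) in Hmul;
    [| intros; apply peval_mul].
  apply (is_derive_ext _ (fun h => line p h * line q h)) in Hprod; [| reflexivity].
  assert (E := is_derive_unique _ _ _ Hmul).
  rewrite (is_derive_unique _ _ _ Hprod) in E.
  unfold line, plus, mult in E; simpl in E.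
  replace (s + 0 * α) with s in E by ring. replace (t + 0 * β) with t in E by ring.
  rewrite <- E. ring.
Qed.
Lemma peval_pds_scale r p s t : peval (pds (pscale r p)) s t = r * peval (pds p) s t.
Proof.
  unfold pds, pscale. induction p as [|[[c k] l] p IH]; simpl; [ring |].
  rewrite IH. destruct k; simpl; ring.
Qed.

Lemma peval_pdt_scale r p s t : peval (pdt (pscale r p)) s t = r * peval (pdt p) s t.
Proof.
  unfold pdt, pscale. induction p as [|[[c k] l] p IH]; simpl; [ring |].
  rewrite IH. destruct l; simpl; ring.
Qed.

Lemma peval_pdir_comp_affine α β P a0 a1 a2 b0 b1 b2 s t :
  peval (pdir α β (pcomp P (affine a0 a1 a2) (affine b0 b1 b2))) s t
  = peval (pdir (a1 * α + a2 * β) (b1 * α + b2 * β) P)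
          (a0 + a1 * s + a2 * t) (b0 + b1 * s + b2 * t).
Proof.
  set (A := a0 + a1 * s + a2 * t). set (B := b0 + b1 * s + b2 * t).
  assert (Hcomp := is_derive_peval_line (pcomp P (affine a0 a1 a2) (affine b0 b1 b2)) s α t β 0).
  assert (HP := is_derive_peval_line P A (a1 * α + a2 * β) B (b1 * α + b2 * β) 0).
  apply (is_derive_ext _ (fun h => peval (pcomp P (affine a0 a1 a2) (affine b0 b1 b2))
                                         (s + h * α) (t + h * β))) in HP.
  2: { intros h. rewrite peval_comp, !peval_affine. unfold A, B. f_equal; ring. }
  apply is_derive_unique in HP. rewrite (is_derive_unique _ _ _ Hcomp) in HP.
  replace (s + 0 * α) with s in HP by ring. replace (t + 0 * β) with t in HP by ring.
  replace (A + 0 * _) with A in HP by ring. replace (B + 0 * _) with B in HP by ring.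
  exact HP.
Qed.

(** * Integrals on an interval *)

Lemma RInt_plus_R (f g : R -> R) a b : ex_RInt f a b -> ex_RInt g a b ->
  RInt (fun x => f x + g x) a b = RInt f a b + RInt g a b.
Proof. intros; apply (RInt_plus f g); assumption. Qed.

Lemma RInt_minus_R (f g : R -> R) a b : ex_RInt f a b -> ex_RInt g a b ->
  RInt (fun x => f x - g x) a b = RInt f a b - RInt g a b.
Proof. intros; apply (RInt_minus f g); assumption. Qed.

Lemma RInt_scal_R (f : R -> R) k a b : ex_RInt f a b ->
  RInt (fun x => k * f x) a b = k * RInt f a b.
Proof. intros; apply (RInt_scal f); assumption. Qed.

Lemma RInt_zero_R a b : RInt (fun _ => 0) a b = 0.
Proof. rewrite RInt_const. unfold scal; simpl; unfold mult; simpl. ring. Qed.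

Lemma RInt_ext_open (f g : R -> R) a b : a <= b ->
  (forall x, a < x < b -> f x = g x) -> RInt f a b = RInt g a b.
Proof.
  intros Hab H. apply RInt_ext. intros x Hx.
  rewrite Rmin_left, Rmax_right in Hx by exact Hab. apply H, Hx.
Qed.

Lemma RInt_reflect (g : R -> R) : (forall x, continuous g x) ->
  RInt (fun t => g (1 - t)) 0 1 = RInt g 0 1.
Proof.
  intros Hg.
  assert (Hrefl : forall x, continuous (fun t => g (1 - t)) x).
  { intros x. apply (continuous_comp (fun t => 1 - t) g); [cont | apply Hg]. }
  assert (E : RInt (fun t => scal (-1) (g (1 - t))) 0 1 = RInt g (1 - 0) (1 - 1)).
  { apply (RInt_comp g (fun t => 1 - t) (fun _ => -1)); intros; [apply Hg |].
    split; [auto_derive; [exact I | ring] | apply continuous_const]. }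
  rewrite (RInt_scal (V := R_CompleteNormedModule) (fun t => g (1 - t))) in E
    by (apply ex_RInt_cont, Hrefl).
  replace (1 - 0) with 1 in E by ring. replace (1 - 1) with 0 in E by ring.
  rewrite <- (opp_RInt_swap g 0 1) in E by (apply ex_RInt_cont, Hg).
  unfold scal, opp in E; simpl in E; unfold mult in E; simpl in E. lra.
Qed.

Lemma continuous_zero_closure (g : R -> R) a b x :
  a < b -> a <= x <= b -> continuous g x -> (forall y, a < y < b -> g y = 0) -> g x = 0.
Proof.
  intros Hab Hx Hc Hz.
  assert (Hlim : forall F, ProperFilter F -> filter_le F (locally x) ->
                 F (fun y => 0 = g y) -> g x = 0).
  { intros F HF Hle HFz. apply (filterlim_locally_unique (F := F) g).
    - exact (filterlim_filter_le_1 _ Hle Hc).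
    - apply (filterlim_ext_loc (fun _ => 0)); [exact HFz | apply filterlim_const]. }
  destruct (Rlt_or_le x b) as [Hxb | Hxb].
  - apply (Hlim (at_right x)); [apply at_right_proper_filter | apply filter_le_within |].
    assert (Hd : 0 < b - x) by lra. exists (mkposreal _ Hd).
    intros y Hy Hxy. symmetry; apply Hz. apply Rabs_lt_between' in Hy. simpl in *. lra.
  - apply (Hlim (at_left x)); [apply at_left_proper_filter | apply filter_le_within |].
    assert (Hd : 0 < b - a) by lra. exists (mkposreal _ Hd).
    intros y Hy Hxy. symmetry; apply Hz. apply Rabs_lt_between' in Hy. simpl in *. lra.
Qed.

Lemma RInt_nonneg_eq0 (f : R -> R) a b : a < b ->
  (forall x, a <= x <= b -> continuous f x) -> (forall x, a < x < b -> 0 <= f x) ->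
  RInt f a b = 0 -> forall x, a < x < b -> f x = 0.
Proof.
  intros Hab Hc Hp HI x Hx.
  destruct (Req_dec (f x) 0) as [E | Hne]; [exact E | exfalso].
  assert (Hpos : 0 < f x) by (specialize (Hp x Hx); lra).
  assert (Hhalf : 0 < f x / 2) by lra.
  destruct (Hc x (conj (Rlt_le _ _ (proj1 Hx)) (Rlt_le _ _ (proj2 Hx)))
              _ (locally_ball (f x) (mkposreal _ Hhalf))) as [d Hd].
  set (e := Rmin d (Rmin (x - a) (b - x)) / 2).
  assert (He : 0 < e /\ e < d /\ e < x - a /\ e < b - x).
  { unfold e. pose proof (cond_pos d).
    pose proof (Rmin_l d (Rmin (x - a) (b - x))). pose proof (Rmin_r d (Rmin (x - a) (b - x))).
    pose proof (Rmin_l (x - a) (b - x)). pose proof (Rmin_r (x - a) (b - x)).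
    assert (0 < Rmin d (Rmin (x - a) (b - x))) by (repeat apply Rmin_pos; lra). lra. }
  assert (Hex : forall u v, a <= u <= v -> v <= b -> ex_RInt f u v).
  { intros u v Huv Hvb. apply (ex_RInt_continuous (V := R_CompleteNormedModule)).
    intros z Hz. rewrite Rmin_left, Rmax_right in Hz by lra. apply Hc; lra. }
  assert (I1 : 0 <= RInt f a (x - e))
    by (apply RInt_ge_0; [lra | apply Hex; lra | intros; apply Hp; lra]).
  assert (I3 : 0 <= RInt f (x + e) b)
    by (apply RInt_ge_0; [lra | apply Hex; lra | intros; apply Hp; lra]).
  assert (I2 : 0 < RInt f (x - e) (x + e)).
  { apply RInt_gt_0; [lra | | intros; apply Hc; lra].
    intros y Hy. assert (Hball : ball x d y) by (apply Rabs_lt_between'; lra).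
    specialize (Hd y Hball). apply Rabs_lt_between' in Hd. simpl in Hd. lra. }
  rewrite <- (RInt_Chasles f a (x - e) b), <- (RInt_Chasles f (x - e) (x + e) b) in HI
    by (apply Hex; lra).
  unfold plus in HI; simpl in HI. lra.
Qed.

Lemma RInt_square_eq0 (g : R -> R) : (forall x, continuous g x) ->
  RInt (fun t => g t * g t) 0 1 = 0 -> forall t, 0 <= t <= 1 -> g t = 0.
Proof.
  intros Hg HI t Ht. apply (continuous_zero_closure g 0 1); [lra | exact Ht | apply Hg |].
  intros y Hy. apply Rsqr_0_uniq, (RInt_nonneg_eq0 (fun t => g t * g t) 0 1); auto; [lra | |].
  - intros; apply (continuous_mult g g); apply Hg.
  - intros; apply Rle_0_sqr.
Qed.

(** * Integrals over the reference triangle *)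

Definition in_ref (s t : R) : Prop := 0 <= s /\ 0 <= t /\ s + t <= 1.
Definition in_ref_open (s t : R) : Prop := 0 < s /\ 0 < t /\ s + t < 1.

Definition ref_int (p : bipoly) : R :=
  RInt (fun s => RInt (fun t => peval p s t) 0 (1 - s)) 0 1.

Definition edge_int (σ τ : R -> R) (p : bipoly) : R := RInt (fun t => peval p (σ t) (τ t)) 0 1.

(* The edges of the reference triangle, each traversed in the direction of the
   corresponding edge [lerp a b], [lerp b c], [lerp c a] of the physical triangle. *)
Definition int_ab : bipoly -> R := edge_int (fun t => t) (fun _ => 0).
Definition int_bc : bipoly -> R := edge_int (fun t => 1 - t) (fun t => t).
Definition int_ca : bipoly -> R := edge_int (fun _ => 0) (fun t => 1 - t).

Section EdgeIntegral.

Variables σ τ : R -> R.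
Hypothesis σ_cont : forall x, continuous σ x.
Hypothesis τ_cont : forall x, continuous τ x.

Lemma edge_int_linear u v p q r :
  (forall t, 0 < t < 1 ->
     peval r (σ t) (τ t) = u * peval p (σ t) (τ t) + v * peval q (σ t) (τ t)) ->
  edge_int σ τ r = u * edge_int σ τ p + v * edge_int σ τ q.
Proof.
  intros H. unfold edge_int.
  rewrite <- !RInt_scal_R, <- RInt_plus_R; try (apply ex_RInt_cont; intros; cont; auto).
  apply RInt_ext_open; [lra | exact H].
Qed.

Lemma edge_int_zero p : (forall t, 0 < t < 1 -> peval p (σ t) (τ t) = 0) -> edge_int σ τ p = 0.
Proof.
  intros H. transitivity (0 * edge_int σ τ p + 0 * edge_int σ τ p); [| ring].
  apply edge_int_linear. intros t Ht. rewrite H by exact Ht. ring.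
Qed.

Lemma edge_int_square_eq0 p : edge_int σ τ (pmul p p) = 0 ->
  forall t, 0 <= t <= 1 -> peval p (σ t) (τ t) = 0.
Proof.
  intros H. apply (RInt_square_eq0 (fun t => peval p (σ t) (τ t))); [intros; cont; auto |].
  transitivity (edge_int σ τ (pmul p p)); [| exact H].
  apply RInt_ext. intros; symmetry; apply peval_mul.
Qed.

End EdgeIntegral.

Lemma int_ab_linear u v p q r :
  (forall t, 0 < t < 1 -> peval r t 0 = u * peval p t 0 + v * peval q t 0) ->
  int_ab r = u * int_ab p + v * int_ab q.
Proof. intros H. apply edge_int_linear; [intros; cont.. | exact H]. Qed.

Lemma int_bc_linear u v p q r :
  (forall t, 0 < t < 1 -> peval r (1 - t) t = u * peval p (1 - t) t + v * peval q (1 - t) t) ->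
  int_bc r = u * int_bc p + v * int_bc q.
Proof. intros H. apply edge_int_linear; [intros; cont.. | exact H]. Qed.

Lemma int_ca_linear u v p q r :
  (forall t, 0 < t < 1 -> peval r 0 (1 - t) = u * peval p 0 (1 - t) + v * peval q 0 (1 - t)) ->
  int_ca r = u * int_ca p + v * int_ca q.
Proof. intros H. apply edge_int_linear; [intros; cont.. | exact H]. Qed.

Lemma int_ab_zero p : (forall t, 0 < t < 1 -> peval p t 0 = 0) -> int_ab p = 0.
Proof. intros H. apply edge_int_zero; [intros; cont.. | exact H]. Qed.

Lemma int_bc_zero p : (forall t, 0 < t < 1 -> peval p (1 - t) t = 0) -> int_bc p = 0.
Proof. intros H. apply edge_int_zero; [intros; cont.. | exact H]. Qed.

Lemma int_ca_zero p : (forall t, 0 < t < 1 -> peval p 0 (1 - t) = 0) -> int_ca p = 0.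
Proof. intros H. apply edge_int_zero; [intros; cont.. | exact H]. Qed.

Lemma peval_pdt_pint p s t : peval (pdt (pint p)) s t = peval p s t.
Proof.
  unfold pdt, pint.
  induction p as [|[[c k] l] p IH]; cbn -[INR]; [reflexivity |].
  rewrite IH. field. apply not_0_INR; lia.
Qed.

Lemma peval_pds_pint p s t : peval (pds (pint p)) s t = peval (pint (pds p)) s t.
Proof.
  unfold pds, pint.
  induction p as [|[[c k] l] p IH]; cbn -[INR]; [reflexivity |].
  rewrite IH. destruct k; cbn -[INR]; field; apply not_0_INR; lia.
Qed.

Lemma peval_pint_t0 p s : peval (pint p) s 0 = 0.
Proof.
  unfold pint. induction p as [|[[c k] l] p IH]; cbn -[INR]; [reflexivity | rewrite IH; ring].
Qed.

Lemma RInt_peval_t p s u : RInt (fun t => peval p s t) 0 u = peval (pint p) s u.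
Proof.
  transitivity (RInt (fun h => peval (pdir 0 1 (pint p)) (s + h * 0) (0 + h * 1)) 0 u).
  { apply RInt_ext. intros h _. rewrite peval_pdir, peval_pdt_pint.
    replace (s + h * 0) with s by ring. replace (0 + h * 1) with h by ring. simpl; ring. }
  rewrite RInt_peval_line.
  replace (s + u * 0) with s by ring. replace (0 + u * 1) with u by ring.
  replace (s + 0 * 0) with s by ring. replace (0 + 0 * 1) with 0 by ring.
  rewrite peval_pint_t0. simpl; ring.
Qed.

Lemma ref_int_closed p : ref_int p = RInt (fun s => peval (pint p) s (1 - s)) 0 1.
Proof. apply RInt_ext. intros s _. apply RInt_peval_t. Qed.

Lemma ref_int_app p q : ref_int (p ++ q) = ref_int p + ref_int q.
Proof.
  rewrite !ref_int_closed, <- RInt_plus_R by (apply ex_RInt_cont; intros; cont).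
  apply RInt_ext. intros s _. unfold pint. rewrite map_app. apply peval_app.
Qed.

Lemma ref_int_scale r p : ref_int (pscale r p) = r * ref_int p.
Proof.
  rewrite !ref_int_closed, <- RInt_scal_R by (apply ex_RInt_cont; intros; cont).
  apply RInt_ext. intros s _.
  rewrite <- !RInt_peval_t, <- RInt_scal_R by (apply ex_RInt_cont; intros; cont).
  apply RInt_ext. intros t _. apply peval_scale.
Qed.

Lemma ref_int_ext p q : (forall s t, in_ref_open s t -> peval p s t = peval q s t) ->
  ref_int p = ref_int q.
Proof.
  intros H. apply RInt_ext_open; [lra |]. intros s Hs.
  apply RInt_ext_open; [lra |]. intros t Ht. apply H. unfold in_ref_open; lra.
Qed.

Lemma ref_int_linear u v p q r :
  (forall s t, in_ref_open s t -> peval r s t = u * peval p s t + v * peval q s t) ->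
  ref_int r = u * ref_int p + v * ref_int q.
Proof.
  intros H. rewrite (ref_int_ext r (pscale u p ++ pscale v q)), ref_int_app, !ref_int_scale;
    [reflexivity |].
  intros s t Hst. rewrite peval_app, !peval_scale. apply H, Hst.
Qed.

Lemma ref_int_zero p : (forall s t, in_ref_open s t -> peval p s t = 0) -> ref_int p = 0.
Proof.
  intros H. rewrite (ref_int_ext p []) by exact H. unfold ref_int. simpl.
  rewrite (RInt_ext _ (fun _ => 0)) by (intros; apply RInt_zero_R). apply RInt_zero_R.
Qed.

Lemma ref_int_pdt p : ref_int (pdt p) = int_bc p - int_ab p.
Proof.
  transitivity (RInt (fun s => peval p s (1 - s) - peval p s 0) 0 1).
  { apply RInt_ext. intros s _.
    transitivity (RInt (fun h => peval (pdir 0 1 p) (s + h * 0) (0 + h * 1)) 0 (1 - s)).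
    { apply RInt_ext. intros h _. rewrite peval_pdir.
      replace (s + h * 0) with s by ring. replace (0 + h * 1) with h by ring. simpl; ring. }
    rewrite RInt_peval_line. f_equal; f_equal; ring. }
  rewrite RInt_minus_R by (apply ex_RInt_cont; intros; cont).
  unfold int_bc, int_ab, edge_int. f_equal.
  rewrite <- (RInt_reflect (fun s => peval p s (1 - s))) by (intros; cont).
  apply RInt_ext. intros; f_equal; ring.
Qed.

Lemma ref_int_pds p : ref_int (pds p) = int_bc p - int_ca p.
Proof.
  rewrite ref_int_closed.
  (* Differentiate [s |-> pint p (s, 1 - s)] along the hypotenuse. *)
  transitivity (RInt (fun h => peval (pdir 1 (-1) (pint p)) (0 + h * 1) (1 + h * (-1))
                               + peval p h (1 - h)) 0 1).
  { apply RInt_ext. intros h _. rewrite peval_pdir, peval_pds_pint, peval_pdt_pint.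
    replace (0 + h * 1) with h by ring. replace (1 + h * (-1)) with (1 - h) by ring. simpl; ring. }
  rewrite RInt_plus_R, RInt_peval_line by (apply ex_RInt_cont; intros; cont).
  replace (0 + 1 * 1) with 1 by ring. replace (1 + 1 * -1) with 0 by ring.
  replace (0 + 0 * 1) with 0 by ring. replace (1 + 0 * -1) with 1 by ring.
  rewrite peval_pint_t0, <- RInt_peval_t.
  unfold int_bc, int_ca, edge_int.
  rewrite <- (RInt_reflect (fun s => peval p s (1 - s))) by (intros; cont).
  rewrite <- (RInt_reflect (fun t => peval p 0 t)) by (intros; cont).
  rewrite (RInt_ext (fun t => peval p (1 - t) (1 - (1 - t))) (fun t => peval p (1 - t) t))
    by (intros; f_equal; ring).
  ring.
Qed.

Lemma ref_int_pdir α β p :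
  ref_int (pdir α β p) = (α + β) * int_bc p - β * int_ab p - α * int_ca p.
Proof.
  unfold pdir. rewrite ref_int_app, !ref_int_scale, ref_int_pds, ref_int_pdt. ring.
Qed.

Lemma ref_int_nonneg_eq0 p : (forall s t, in_ref_open s t -> 0 <= peval p s t) ->
  ref_int p = 0 -> forall s t, in_ref_open s t -> peval p s t = 0.
Proof.
  intros Hp HI s t [Hs [Ht Hst]].
  assert (Hslice : forall s, 0 < s < 1 -> RInt (fun t => peval p s t) 0 (1 - s) = 0).
  { intros x Hx. rewrite RInt_peval_t. revert x Hx.
    apply (RInt_nonneg_eq0 _ 0 1); [lra | intros; cont | | rewrite <- ref_int_closed; exact HI].
    intros x Hx. rewrite <- RInt_peval_t.
    apply RInt_ge_0; [lra | apply ex_RInt_cont; intros; cont |].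
    intros y Hy; apply Hp; unfold in_ref_open; lra. }
  apply (RInt_nonneg_eq0 (fun t => peval p s t) 0 (1 - s)); [lra | intros; cont | | | lra].
  - intros y Hy; apply Hp; unfold in_ref_open; lra.
  - apply Hslice; lra.
Qed.

Lemma peval_zero_closure p : (forall s t, in_ref_open s t -> peval p s t = 0) ->
  forall s t, in_ref s t -> peval p s t = 0.
Proof.
  intros Hz s t [Hs [Ht Hst]].
  (* Approach [(s, t)] from the centroid. *)
  assert (E := continuous_zero_closure
                 (fun h => peval p (s + h * (1/3 - s)) (t + h * (1/3 - t))) 0 1 0).
  simpl in E. replace (s + 0 * (1/3 - s)) with s in E by ring.
  replace (t + 0 * (1/3 - t)) with t in E by ring.
  apply E; [lra | lra | cont |]. intros y Hy. apply Hz. clear E Hz. unfold in_ref_open.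
  assert (0 <= (1 - y) * s) by (apply Rmult_le_pos; lra).
  assert (0 <= (1 - y) * t) by (apply Rmult_le_pos; lra).
  assert (0 <= (1 - y) * (1 - s - t)) by (apply Rmult_le_pos; lra).
  repeat split; lra.
Qed.

Lemma ref_int_weighted_square_eq0 w q :
  (forall s t, in_ref_open s t -> 0 < peval w s t) -> ref_int (pmul w (pmul q q)) = 0 ->
  forall s t, in_ref s t -> peval q s t = 0.
Proof.
  intros Hw HI. apply peval_zero_closure. intros s t Hst.
  assert (Hnonneg : forall x y, in_ref_open x y -> 0 <= peval (pmul w (pmul q q)) x y).
  { intros x y Hxy. rewrite !peval_mul.
    apply Rmult_le_pos; [apply Rlt_le, Hw, Hxy | apply Rle_0_sqr]. }
  assert (Hsq := ref_int_nonneg_eq0 _ Hnonneg HI s t Hst).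
  rewrite !peval_mul in Hsq. specialize (Hw s t Hst).
  apply Rmult_integral in Hsq as [Hsq | Hsq]; [lra | apply Rsqr_0_uniq, Hsq].
Qed.

(** * Comparison with [poly2] and [poly1_on01] *)

Lemma bipoly_of_poly2 n f : poly2 n f ->
  exists p, deg_le n p /\ forall x y, f x y = peval p x y.
Proof.
  intros [cf Hf].
  set (m := fun k l => if (k + l <=? n)%nat then [(cf k l, k, l)] else []).
  exists (psum (fun k => psum (fun l => m k l) n) n). split.
  - apply deg_le_sum; intros k _; apply deg_le_sum; intros l _. unfold m.
    destruct (k + l <=? n)%nat eqn:E; [| apply deg_le_nil].
    apply deg_le_cons; [apply Nat.leb_le, E | apply deg_le_nil].
  - intros x y. rewrite Hf, peval_sum. apply sum_eq; intros k _.
    rewrite peval_sum. apply sum_eq; intros l _. unfold m.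
    destruct (k + l <=? n)%nat; simpl; ring.
Qed.

Lemma sum_f_R0_zero (f : nat -> R) n : (forall i, (i <= n)%nat -> f i = 0) -> sum_f_R0 f n = 0.
Proof.
  induction n; intros H; simpl; [apply H; lia |].
  rewrite IHn, (H (S n)) by (lia || intros; apply H; lia). ring.
Qed.

Lemma sum_f_R0_single (f : nat -> R) n i : (i <= n)%nat ->
  (forall m, (m <= n)%nat -> m <> i -> f m = 0) -> sum_f_R0 f n = f i.
Proof.
  induction n; intros Hi H; simpl.
  - replace i with O by lia. reflexivity.
  - destruct (Nat.eq_dec i (S n)) as [-> | Hne].
    + rewrite sum_f_R0_zero by (intros m Hm; apply H; lia). ring.
    + rewrite IHn, (H (S n)) by (lia || intros; apply H; lia). ring.
Qed.

Lemma poly2_plus n f g : poly2 n f -> poly2 n g -> poly2 n (fun x y => f x y + g x y).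
Proof.
  intros [cf Hf] [cg Hg]. exists (fun k l => cf k l + cg k l). intros x y.
  rewrite Hf, Hg, <- sum_plus. apply sum_eq; intros k _.
  rewrite <- sum_plus. apply sum_eq; intros l _.
  destruct (k + l <=? n)%nat; ring.
Qed.

Lemma poly2_monomial n c k l : (k + l <= n)%nat -> poly2 n (fun x y => c * x ^ k * y ^ l).
Proof.
  intros Hkl. exists (fun k' l' => if andb (k' =? k)%nat (l' =? l)%nat then c else 0).
  intros x y. rewrite (sum_f_R0_single _ n k); [| lia |].
  - rewrite (sum_f_R0_single _ n l); [| lia |].
    + rewrite !Nat.eqb_refl. apply Nat.leb_le in Hkl. rewrite Hkl. simpl. ring.
    + intros m _ Hm. apply Nat.eqb_neq in Hm. rewrite Nat.eqb_refl, Hm.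
      simpl. destruct (k + m <=? n)%nat; ring.
  - intros m _ Hm. apply sum_f_R0_zero. intros i _. apply Nat.eqb_neq in Hm. rewrite Hm.
    simpl. destruct (m + i <=? n)%nat; ring.
Qed.

Lemma poly2_of_bipoly n p : deg_le n p -> poly2 n (fun x y => peval p x y).
Proof.
  induction p as [|[[c k] l] p IH]; intros Hp; simpl.
  - exists (fun _ _ => 0). intros x y. symmetry. apply sum_f_R0_zero. intros k _.
    apply sum_f_R0_zero. intros l _. destruct (k + l <=? n)%nat; ring.
  - apply (poly2_plus n (fun x y => c * x ^ k * y ^ l)).
    + apply poly2_monomial, (Hp c k l). left; reflexivity.
    + apply IH, (deg_le_tail _ _ _ Hp).
Qed.

Lemma bipoly_of_poly1 n g : poly1_on01 n g ->
  exists p, deg_le n p /\ forall t, 0 <= t <= 1 -> g t = peval p t 0.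
Proof.
  intros [cf Hg]. exists (psum (fun k => [(cf k, k, O)]) n). split.
  - apply deg_le_sum. intros k Hk. apply deg_le_cons; [lia | apply deg_le_nil].
  - intros t Ht. rewrite Hg, peval_sum by exact Ht. apply sum_eq; intros k _. simpl; ring.
Qed.

(** * The affine map onto the triangle *)

Lemma div2_peval p q x y : div2 (peval p) (peval q) x y = peval (pds p) x y + peval (pdt q) x y.
Proof.
  unfold div2.
  rewrite (Derive_ext _ (fun h => peval p (0 + h * 1) (y + h * 0))) by (intros; f_equal; ring).
  rewrite (Derive_ext (fun y' => peval q x y') (fun h => peval q (x + h * 0) (0 + h * 1)))
    by (intros; f_equal; ring).
  rewrite !(is_derive_unique _ _ _ (is_derive_peval_line _ _ _ _ _ _)), !peval_pdir.
  replace (0 + x * 1) with x by ring. replace (y + x * 0) with y by ring.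
  replace (x + y * 0) with x by ring. replace (0 + y * 1) with y by ring. ring.
Qed.

Definition area2 (a b c : pt) : R := det2 (psub b a) (psub c a).

Definition to_ref (a b c : pt) (p : bipoly) : bipoly :=
  pcomp p (affine (fst a) (fst b - fst a) (fst c - fst a))
          (affine (snd a) (snd b - snd a) (snd c - snd a)).

(* The reference coordinates [(s, t)] of [(x, y)], i.e. the inverse of [tri_pt a b c]
   written out by Cramer's rule. *)
Definition coord_s (a b c : pt) : bipoly :=
  affine ((snd a * (fst c - fst a) - fst a * (snd c - snd a)) / area2 a b c)
         ((snd c - snd a) / area2 a b c) (- (fst c - fst a) / area2 a b c).
Definition coord_t (a b c : pt) : bipoly :=
  affine ((fst a * (snd b - snd a) - snd a * (fst b - fst a)) / area2 a b c)
         (- (snd b - snd a) / area2 a b c) ((fst b - fst a) / area2 a b c).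

Definition of_ref (a b c : pt) (p : bipoly) : bipoly := pcomp p (coord_s a b c) (coord_t a b c).

Definition tangent (a b c : pt) (α β : R) : pt :=
  (α * (fst b - fst a) + β * (fst c - fst a), α * (snd b - snd a) + β * (snd c - snd a)).

Lemma peval_to_ref a b c p s t :
  peval (to_ref a b c p) s t = peval p (fst (tri_pt a b c s t)) (snd (tri_pt a b c s t)).
Proof. unfold to_ref. rewrite peval_comp, !peval_affine. simpl. f_equal; ring. Qed.

Lemma peval_of_ref_tri_pt a b c p s t : area2 a b c <> 0 ->
  peval (of_ref a b c p) (fst (tri_pt a b c s t)) (snd (tri_pt a b c s t)) = peval p s t.
Proof.
  intros HD. unfold of_ref, coord_s, coord_t. rewrite peval_comp, !peval_affine.
  f_equal; revert HD; destruct a as [a1 a2], b as [b1 b2], c as [c1 c2];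
    unfold area2, det2, psub, tri_pt; simpl; intros; field; exact HD.
Qed.

Lemma deg_le_to_ref n a b c p : deg_le n p -> deg_le n (to_ref a b c p).
Proof. intros Hp. apply deg_le_comp; [exact Hp | apply deg_le_affine | apply deg_le_affine]. Qed.

Lemma deg_le_of_ref n a b c p : deg_le n p -> deg_le n (of_ref a b c p).
Proof. intros Hp. apply deg_le_comp; [exact Hp | apply deg_le_affine | apply deg_le_affine]. Qed.

Lemma div2_of_ref a b c α β p x y : area2 a b c <> 0 ->
  div2 (peval (pscale (fst (tangent a b c α β)) (of_ref a b c p)))
       (peval (pscale (snd (tangent a b c α β)) (of_ref a b c p))) x y
  = peval (of_ref a b c (pdir α β p)) x y.
Proof.
  intros HD. rewrite div2_peval, peval_pds_scale, peval_pdt_scale, <- peval_pdir.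
  unfold of_ref at 1, coord_s, coord_t. rewrite peval_pdir_comp_affine.
  unfold of_ref, coord_s, coord_t. rewrite peval_comp, !peval_affine.
  do 2 f_equal; revert HD; destruct a as [a1 a2], b as [b1 b2], c as [c1 c2];
    unfold area2, det2, psub, tangent; simpl; intros; field; exact HD.
Qed.

Lemma lerp_ab a b c t : lerp a b t = tri_pt a b c t 0.
Proof. unfold lerp, tri_pt; f_equal; ring. Qed.
Lemma lerp_bc a b c t : lerp b c t = tri_pt a b c (1 - t) t.
Proof. unfold lerp, tri_pt; f_equal; ring. Qed.
Lemma lerp_ca a b c t : lerp c a t = tri_pt a b c 0 (1 - t).
Proof. unfold lerp, tri_pt; f_equal; ring. Qed.

Lemma seg_len_eq0 p q : seg_len p q = 0 -> fst q = fst p /\ snd q = snd p.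
Proof.
  unfold seg_len. intros H.
  pose proof (pow2_ge_0 (fst q - fst p)) as Hx. pose proof (pow2_ge_0 (snd q - snd p)) as Hy.
  apply sqrt_eq_0 in H; [| lra].
  assert (fst q - fst p = 0) by (apply Rsqr_0_uniq; rewrite Rsqr_pow2; lra).
  assert (snd q - snd p = 0) by (apply Rsqr_0_uniq; rewrite Rsqr_pow2; lra). lra.
Qed.

Lemma seg_len_edges a b c : area2 a b c <> 0 ->
  seg_len a b <> 0 /\ seg_len b c <> 0 /\ seg_len c a <> 0.
Proof.
  destruct a as [a1 a2], b as [b1 b2], c as [c1 c2]; unfold area2, det2, psub; simpl.
  intros HD. repeat split; intros Hl; apply seg_len_eq0 in Hl; simpl in Hl;
    destruct Hl as [E1 E2]; apply HD; subst; ring.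
Qed.

Lemma edge_flux_scaled p q r vb Q ex ey (g : R -> R) :
  seg_len p q <> 0 -> ex_RInt g 0 1 ->
  (forall t, 0 < t < 1 ->
     vb (fst (lerp p q t)) (snd (lerp p q t)) * peval Q (fst (lerp p q t)) (snd (lerp p q t))
     = g t) ->
  edge_flux p q r vb (peval (pscale ex Q)) (peval (pscale ey Q)) =
  (if Rlt_dec 0 ((snd q - snd p) * (fst r - fst p) + (fst p - fst q) * (snd r - snd p))
   then -1 else 1) * (ex * (snd q - snd p) - ey * (fst q - fst p)) * RInt g 0 1.
Proof.
  intros Hl Hg Hvb. unfold edge_flux, seg_int, out_normal. cbv zeta. cbn [fst snd].
  set (sg := if Rlt_dec 0 _ then -1 else 1).
  rewrite (RInt_ext_open _ (fun t => sg * (ex * (snd q - snd p) - ey * (fst q - fst p))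
                                     / seg_len p q * g t)) by
    (lra || intros t Ht; rewrite <- Hvb by exact Ht; rewrite !peval_scale; field; exact Hl).
  rewrite RInt_scal_R by exact Hg. field. exact Hl.
Qed.

Lemma sign_neg_mul D : D <> 0 -> (if Rlt_dec 0 (- D) then -1 else 1) * D = Rabs D.
Proof.
  intros HD. destruct (Rlt_dec 0 (- D)).
  - rewrite Rabs_left by lra. ring.
  - rewrite Rabs_right by lra. ring.
Qed.

Lemma edge_flux_of_ref a b c p q r vb σ τ ex ey P G :
  area2 a b c <> 0 -> seg_len p q <> 0 ->
  (forall x, continuous σ x) -> (forall x, continuous τ x) ->
  (forall t, lerp p q t = tri_pt a b c (σ t) (τ t)) ->
  (forall t, 0 <= t <= 1 -> vb (fst (lerp p q t)) (snd (lerp p q t)) = peval G (σ t) (τ t)) ->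
  edge_flux p q r vb (peval (pscale ex (of_ref a b c P))) (peval (pscale ey (of_ref a b c P))) =
  (if Rlt_dec 0 ((snd q - snd p) * (fst r - fst p) + (fst p - fst q) * (snd r - snd p))
   then -1 else 1) * (ex * (snd q - snd p) - ey * (fst q - fst p)) * edge_int σ τ (pmul G P).
Proof.
  intros HD Hl Hσ Hτ Hlerp HG.
  apply edge_flux_scaled; [exact Hl | apply ex_RInt_cont; intros; cont; auto |].
  intros t Ht. rewrite HG, Hlerp, peval_of_ref_tri_pt, peval_mul by (exact HD || lra). reflexivity.
Qed.

Lemma bdry_flux_of_ref a b c vb α β p Gab Gbc Gca :
  area2 a b c <> 0 ->
  (forall t, 0 <= t <= 1 -> vb (fst (lerp a b t)) (snd (lerp a b t)) = peval Gab t 0) ->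
  (forall t, 0 <= t <= 1 -> vb (fst (lerp b c t)) (snd (lerp b c t)) = peval Gbc (1 - t) t) ->
  (forall t, 0 <= t <= 1 -> vb (fst (lerp c a t)) (snd (lerp c a t)) = peval Gca 0 (1 - t)) ->
  bdry_flux a b c vb (peval (pscale (fst (tangent a b c α β)) (of_ref a b c p)))
                     (peval (pscale (snd (tangent a b c α β)) (of_ref a b c p)))
  = Rabs (area2 a b c) * ((α + β) * int_bc (pmul Gbc p) - β * int_ab (pmul Gab p)
                          - α * int_ca (pmul Gca p)).
Proof.
  intros HD Hab Hbc Hca. destruct (seg_len_edges a b c HD) as [Lab [Lbc Lca]].
  unfold bdry_flux, int_ab, int_bc, int_ca.
  rewrite (edge_flux_of_ref a b c a b c vb (fun t => t) (fun _ => 0) _ _ p Gab),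
          (edge_flux_of_ref a b c b c a vb (fun t => 1 - t) (fun t => t) _ _ p Gbc),
          (edge_flux_of_ref a b c c a b vb (fun _ => 0) (fun t => 1 - t) _ _ p Gca);
    try assumption; try (intros; cont);
    try (intros; apply lerp_ab || apply lerp_bc || apply lerp_ca).
  rewrite <- (sign_neg_mul _ HD).
  replace ((snd b - snd a) * (fst c - fst a) + (fst a - fst b) * (snd c - snd a))
    with (- area2 a b c) by (unfold area2, det2, psub; simpl; ring).
  replace ((snd c - snd b) * (fst a - fst b) + (fst b - fst c) * (snd a - snd b))
    with (- area2 a b c) by (unfold area2, det2, psub; simpl; ring).
  replace ((snd a - snd c) * (fst b - fst c) + (fst c - fst a) * (snd b - snd c))
    with (- area2 a b c) by (unfold area2, det2, psub; simpl; ring).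
  unfold tangent, area2, det2, psub; simpl. ring.
Qed.


Lemma tri_int_ref a b c f F :
  (forall s t, in_ref_open s t ->
     f (fst (tri_pt a b c s t)) (snd (tri_pt a b c s t)) = peval F s t) ->
  tri_int a b c f = Rabs (area2 a b c) * ref_int F.
Proof.
  intros H. unfold tri_int, ref_int, area2. f_equal.
  apply RInt_ext_open; [lra |]. intros s Hs. apply RInt_ext_open; [lra |].
  intros t Ht. apply H. unfold in_ref_open; lra.
Qed.

Definition wdir (a b c : pt) (W1 W2 : bipoly) (α β : R) : bipoly :=
  to_ref a b c (pscale (fst (tangent a b c α β)) W1 ++ pscale (snd (tangent a b c α β)) W2).

Lemma weak_grad_identity_ref j a b c v0 vb w1 w2 V0 W1 W2 Gab Gbc Gca α β p :
  area2 a b c <> 0 -> is_weak_grad j a b c v0 vb w1 w2 ->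
  (forall s t, v0 (fst (tri_pt a b c s t)) (snd (tri_pt a b c s t)) = peval V0 s t) ->
  (forall x y, w1 x y = peval W1 x y) -> (forall x y, w2 x y = peval W2 x y) ->
  (forall t, 0 <= t <= 1 -> vb (fst (lerp a b t)) (snd (lerp a b t)) = peval Gab t 0) ->
  (forall t, 0 <= t <= 1 -> vb (fst (lerp b c t)) (snd (lerp b c t)) = peval Gbc (1 - t) t) ->
  (forall t, 0 <= t <= 1 -> vb (fst (lerp c a t)) (snd (lerp c a t)) = peval Gca 0 (1 - t)) ->
  deg_le (S j) p ->
  ref_int (pmul (wdir a b c W1 W2 α β) p) + ref_int (pmul V0 (pdir α β p))
  = (α + β) * int_bc (pmul Gbc p) - β * int_ab (pmul Gab p) - α * int_ca (pmul Gca p).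
Proof.
  intros HD [_ [_ Hwg]] HV0 HW1 HW2 Hab Hbc Hca Hp.
  assert (Hq : forall r, poly2 (S j) (peval (pscale r (of_ref a b c p))))
    by (intros; apply poly2_of_bipoly, deg_le_scale, deg_le_of_ref, Hp).
  specialize (Hwg _ _ (Hq (fst (tangent a b c α β))) (Hq (snd (tangent a b c α β)))).
  rewrite (bdry_flux_of_ref _ _ _ _ _ _ _ _ _ _ HD Hab Hbc Hca) in Hwg.
  rewrite (tri_int_ref _ _ _ _ (pmul (wdir a b c W1 W2 α β) p)) in Hwg.
  2: { intros s t _. unfold wdir.
       rewrite !peval_mul, peval_to_ref, peval_app, !peval_scale, HW1, HW2,
               peval_of_ref_tri_pt by exact HD. ring. }
  rewrite (tri_int_ref _ _ _ _ (pmul V0 (pdir α β p))) in Hwg.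
  2: { intros s t _. rewrite div2_of_ref, peval_mul, HV0, peval_of_ref_tri_pt
         by exact HD. reflexivity. }
  apply (Rmult_eq_reg_l (Rabs (area2 a b c))); [| apply Rabs_no_R0, HD].
  rewrite Rmult_plus_distr_l, Hwg. ring.
Qed.

(** * Vanishing weak gradient on the reference triangle *)

Lemma split_at_0 n p : deg_le (S n) p ->
  exists d0 q, deg_le n q /\ forall t, peval p t 0 = d0 + t * peval q t 0.
Proof.
  induction p as [|[[c k] l] p IH]; intros Hp.
  - exists 0, []. split; [apply deg_le_nil | intros; simpl; ring].
  - destruct (IH (deg_le_tail _ _ _ Hp)) as [d0 [q [Hq Hpq]]].
    assert (Hkl : (k + l <= S n)%nat) by (apply (Hp c); left; reflexivity).
    destruct l as [|l]; [destruct k as [|k] |].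
    + exists (c + d0), q. split; [exact Hq | intros t; simpl; rewrite Hpq; ring].
    + exists d0, ((c, k, O) :: q). split; [apply deg_le_cons; [lia | exact Hq] |].
      intros t. simpl. rewrite Hpq. ring.
    + exists d0, q. split; [exact Hq | intros t; simpl; rewrite Hpq; ring].
Qed.

(* Test polynomials: [p1 = d0 s] vanishes on [ca] and [p2 = t (d0 + q(t))] vanishes on [ab],
   while [p1 + p2] restricts to [kbc] on [bc]. *)
Lemma edge_weights_zero n kab kbc kca :
  deg_le (S n) kab -> deg_le (S n) kbc -> deg_le (S n) kca ->
  (forall p, deg_le (S n) p -> int_bc (pmul kbc p) = int_ab (pmul kab p)) ->
  (forall p, deg_le (S n) p -> int_bc (pmul kbc p) = int_ca (pmul kca p)) ->
  forall t, 0 <= t <= 1 ->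
    peval kab t 0 = 0 /\ peval kbc (1 - t) t = 0 /\ peval kca 0 (1 - t) = 0.
Proof.
  intros Hab Hbc Hca Eab Eca.
  destruct (split_at_0 n (pcomp kbc (affine 1 (-1) 0) (affine 0 1 0))) as [d0 [q [Hq Hsplit]]].
  { apply deg_le_comp; auto using deg_le_affine. }
  set (p1 := affine 0 d0 0).
  set (p2 := pmul (affine 0 0 1) (pcomp ((d0, O, O) :: q) (affine 0 0 1) (affine 0 0 0))).
  assert (Hp1 : deg_le (S n) p1) by (apply (deg_le_weaken 1); [lia | apply deg_le_affine]).
  assert (Hp2 : deg_le (S n) p2).
  { apply (deg_le_mul 1 n); [apply deg_le_affine |].
    apply deg_le_comp; [apply deg_le_cons; [lia | exact Hq] | apply deg_le_affine..]. }
  assert (Hbc_sq : int_bc (pmul kbc kbc) = 0).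
  { rewrite (int_bc_linear 1 1 (pmul kbc p1) (pmul kbc p2)).
    - rewrite (Eab p2 Hp2), (Eca p1 Hp1), int_ab_zero, int_ca_zero;
        [ring | intros t _; unfold p1, p2; rewrite !peval_mul, ?peval_affine; ring..].
    - intros t _. specialize (Hsplit t). rewrite peval_comp, !peval_affine in Hsplit.
      rewrite !peval_mul. unfold p1, p2. rewrite peval_mul, peval_comp, !peval_affine.
      replace (1 + -1 * t + 0 * 0) with (1 - t) in Hsplit by ring.
      replace (0 + 1 * t + 0 * 0) with t in Hsplit by ring.
      simpl. replace (0 + 0 * (1 - t) + 1 * t) with t by ring.
      replace (0 + 0 * (1 - t) + 0 * t) with 0 by ring. rewrite Hsplit. ring. }
  assert (Zbc : forall t, 0 <= t <= 1 -> peval kbc (1 - t) t = 0)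
    by (apply (edge_int_square_eq0 (fun t => 1 - t) (fun t => t)); [intros; cont.. | exact Hbc_sq]).
  assert (Hbc0 : forall p, int_bc (pmul kbc p) = 0).
  { intros p. apply int_bc_zero. intros t Ht. rewrite peval_mul, Zbc by lra. ring. }
  assert (Zab : forall t, 0 <= t <= 1 -> peval kab t 0 = 0).
  { apply (edge_int_square_eq0 (fun t => t) (fun _ => 0)); [intros; cont.. |].
    fold int_ab. rewrite <- Eab, Hbc0 by exact Hab. reflexivity. }
  assert (Zca : forall t, 0 <= t <= 1 -> peval kca 0 (1 - t) = 0).
  { apply (edge_int_square_eq0 (fun _ => 0) (fun t => 1 - t)); [intros; cont.. |].
    fold int_ca. rewrite <- Eca, Hbc0 by exact Hca. reflexivity. }
  intros t Ht. auto.
Qed.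

(* Integrating [pdir α β (V0 p)] by parts turns the weak-gradient identity into an
   identity for the strong derivative of [V0], with the edge jumps [V0 - G] as weights. *)
Lemma jump_identity V0 Gab Gbc Gca α β p :
  ref_int (pmul V0 (pdir α β p))
  = (α + β) * int_bc (pmul Gbc p) - β * int_ab (pmul Gab p) - α * int_ca (pmul Gca p) ->
  ref_int (pmul (pdir α β V0) p)
  = (α + β) * int_bc (pmul (pminus V0 Gbc) p) - β * int_ab (pmul (pminus V0 Gab) p)
    - α * int_ca (pmul (pminus V0 Gca) p).
Proof.
  intros H.
  assert (Hprod : ref_int (pdir α β (pmul V0 p))
                  = 1 * ref_int (pmul (pdir α β V0) p) + 1 * ref_int (pmul V0 (pdir α β p))).
  { apply ref_int_linear. intros s t _. rewrite peval_pdir_mul, !peval_mul. ring. }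
  rewrite ref_int_pdir, H in Hprod.
  rewrite (int_bc_linear 1 (-1) (pmul V0 p) (pmul Gbc p)),
          (int_ab_linear 1 (-1) (pmul V0 p) (pmul Gab p)),
          (int_ca_linear 1 (-1) (pmul V0 p) (pmul Gca p))
    by (intros; rewrite !peval_mul, peval_pminus; ring).
  lra.
Qed.

Lemma pdir_zero_of_moments j V0 α β w :
  deg_le j V0 -> deg_le 2 w -> (forall s t, in_ref_open s t -> 0 < peval w s t) ->
  (forall p, deg_le (S j) (pmul w p) -> ref_int (pmul (pdir α β V0) (pmul w p)) = 0) ->
  forall s t, in_ref s t -> peval (pdir α β V0) s t = 0.
Proof.
  intros HV0 Hw Hpos Hmom. destruct j as [|j].
  - intros; apply peval_pdir_const, HV0.
  - apply (ref_int_weighted_square_eq0 w); [exact Hpos |].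
    assert (Hd : deg_le j (pdir α β V0)) by (apply deg_le_pdir, HV0).
    rewrite <- (Hmom (pdir α β V0)) by exact (deg_le_mul 2 j _ _ Hw Hd).
    apply ref_int_ext. intros s t _. rewrite !peval_mul. ring.
Qed.

Lemma const_of_pdir_zero V0 :
  (forall s t, in_ref s t -> peval (pdir 1 0 V0) s t = 0) ->
  (forall s t, in_ref s t -> peval (pdir 0 1 V0) s t = 0) ->
  forall s t, in_ref s t -> peval V0 s t = peval V0 0 0.
Proof.
  intros Hs Ht s t [H0s [H0t Hst]].
  assert (Vt := RInt_peval_line V0 s 0 0 1 0 t).
  assert (Vs := RInt_peval_line V0 0 1 0 0 0 s).
  rewrite RInt_ext_open with (g := fun _ => 0), RInt_zero_R in Vt, Vs.
  - replace (s + t * 0) with s in Vt by ring. replace (0 + t * 1) with t in Vt by ring.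
    replace (s + 0 * 0) with s in Vt by ring. replace (0 + 0 * 1) with 0 in Vt by ring.
    replace (0 + s * 1) with s in Vs by ring. replace (0 + s * 0) with 0 in Vs by ring.
    replace (0 + 0 * 1) with 0 in Vs by ring. replace (0 + 0 * 0) with 0 in Vs by ring.
    lra.
  - lra.
  - intros h Hh. apply Hs. unfold in_ref. lra.
  - lra.
  - intros h Hh. apply Ht. unfold in_ref. lra.
Qed.

Section VanishingGradient.

Variables (j : nat) (V0 Kab Kbc Kca : bipoly).
Hypothesis deg_V0 : deg_le j V0.
Hypothesis edge_moments : forall α β p, deg_le (S j) p ->
  ref_int (pmul (pdir α β V0) p)
  = (α + β) * int_bc (pmul Kbc p) - β * int_ab (pmul Kab p) - α * int_ca (pmul Kca p).

(* The weights [t (1 - s - t)] and [s (1 - s - t)] vanish on the two edges seen by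
   [∂t] and [∂s] respectively. *)
Lemma pdt_zero_of_edge_moments s t : in_ref s t -> peval (pdir 0 1 V0) s t = 0.
Proof.
  apply (pdir_zero_of_moments j V0 0 1 (pmul (affine 0 0 1) (affine 1 (-1) (-1)))).
  - exact deg_V0.
  - apply (deg_le_mul 1 1); apply deg_le_affine.
  - intros x y Hxy. rewrite peval_mul, !peval_affine. unfold in_ref_open in Hxy.
    apply Rmult_lt_0_compat; lra.
  - intros p Hp. rewrite edge_moments, int_bc_zero, int_ab_zero by
      (exact Hp || intros; rewrite !peval_mul, !peval_affine; ring). ring.
Qed.

Lemma pds_zero_of_edge_moments s t : in_ref s t -> peval (pdir 1 0 V0) s t = 0.
Proof.
  apply (pdir_zero_of_moments j V0 1 0 (pmul (affine 0 1 0) (affine 1 (-1) (-1)))).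
  - exact deg_V0.
  - apply (deg_le_mul 1 1); apply deg_le_affine.
  - intros x y Hxy. rewrite peval_mul, !peval_affine. unfold in_ref_open in Hxy.
    apply Rmult_lt_0_compat; lra.
  - intros p Hp. rewrite edge_moments, int_bc_zero, int_ca_zero by
      (exact Hp || intros; rewrite !peval_mul, !peval_affine; ring). ring.
Qed.

Lemma ref_int_pdir_zero_of_edge_moments α β p : ref_int (pmul (pdir α β V0) p) = 0.
Proof.
  apply ref_int_zero. intros s t Hst.
  assert (Hin : in_ref s t) by (unfold in_ref_open, in_ref in *; lra).
  pose proof (pds_zero_of_edge_moments s t Hin) as Ds.
  pose proof (pdt_zero_of_edge_moments s t Hin) as Dt.
  rewrite !peval_pdir in Ds, Dt. rewrite peval_mul, peval_pdir.
  replace (peval (pds V0) s t) with 0 by lra. replace (peval (pdt V0) s t) with 0 by lra. ring.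
Qed.

End VanishingGradient.

Lemma ref_const_of_zero_weak_grad j V0 Gab Gbc Gca :
  deg_le j V0 -> deg_le (S j) Gab -> deg_le (S j) Gbc -> deg_le (S j) Gca ->
  (forall α β p, deg_le (S j) p ->
     ref_int (pmul V0 (pdir α β p))
     = (α + β) * int_bc (pmul Gbc p) - β * int_ab (pmul Gab p) - α * int_ca (pmul Gca p)) ->
  exists C, (forall s t, in_ref s t -> peval V0 s t = C) /\
    (forall t, 0 <= t <= 1 ->
       peval Gab t 0 = C /\ peval Gbc (1 - t) t = C /\ peval Gca 0 (1 - t) = C).
Proof.
  intros HV0 Hab Hbc Hca Hweak.
  assert (J := fun α β p Hp => jump_identity V0 Gab Gbc Gca α β p (Hweak α β p Hp)).
  assert (Z := ref_int_pdir_zero_of_edge_moments j V0 _ _ _ HV0 J).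
  assert (Hdeg : forall G, deg_le (S j) G -> deg_le (S j) (pminus V0 G))
    by (intros; apply deg_le_pminus; [apply (deg_le_weaken j); [lia | exact HV0] | assumption]).
  assert (Ebc_ab : forall p, deg_le (S j) p ->
                   int_bc (pmul (pminus V0 Gbc) p) = int_ab (pmul (pminus V0 Gab) p)).
  { intros p Hp. assert (E := J 0 1 p Hp). rewrite Z in E. lra. }
  assert (Ebc_ca : forall p, deg_le (S j) p ->
                   int_bc (pmul (pminus V0 Gbc) p) = int_ca (pmul (pminus V0 Gca) p)).
  { intros p Hp. assert (E := J 1 0 p Hp). rewrite Z in E. lra. }
  assert (Hjump := edge_weights_zero j _ _ _ (Hdeg _ Hab) (Hdeg _ Hbc) (Hdeg _ Hca) Ebc_ab Ebc_ca).
  assert (HC := const_of_pdir_zero V0 (pds_zero_of_edge_moments j V0 _ _ _ HV0 J)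
                                      (pdt_zero_of_edge_moments j V0 _ _ _ HV0 J)).
  exists (peval V0 0 0). split; [exact HC |].
  intros t Ht. destruct (Hjump t Ht) as [Zab [Zbc Zca]]. rewrite !peval_pminus in Zab, Zbc, Zca.
  rewrite (HC t 0) in Zab by (unfold in_ref; lra).
  rewrite (HC (1 - t) t) in Zbc by (unfold in_ref; lra).
  rewrite (HC 0 (1 - t)) in Zca by (unfold in_ref; lra).
  lra.
Qed.

Lemma ref_zero_weak_grad_of_const j α β V0 Gab Gbc Gca wd C :
  deg_le (S j) wd ->
  (forall s t, in_ref s t -> peval V0 s t = C) ->
  (forall t, 0 <= t <= 1 ->
     peval Gab t 0 = C /\ peval Gbc (1 - t) t = C /\ peval Gca 0 (1 - t) = C) ->
  (forall p, deg_le (S j) p ->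
     ref_int (pmul wd p) + ref_int (pmul V0 (pdir α β p))
     = (α + β) * int_bc (pmul Gbc p) - β * int_ab (pmul Gab p) - α * int_ca (pmul Gca p)) ->
  forall s t, in_ref s t -> peval wd s t = 0.
Proof.
  intros Hwd HV0 HG Hweak.
  specialize (Hweak wd Hwd).
  rewrite (ref_int_linear C 0 (pdir α β wd) wd (pmul V0 (pdir α β wd))), ref_int_pdir in Hweak
    by (intros s t Hst; rewrite peval_mul, HV0 by (unfold in_ref_open, in_ref in *; lra); ring).
  rewrite (int_ab_linear C 0 wd wd (pmul Gab wd)), (int_bc_linear C 0 wd wd (pmul Gbc wd)),
          (int_ca_linear C 0 wd wd (pmul Gca wd))
    in Hweak by (intros t Ht; destruct (HG t) as [Eab [Ebc Eca]]; [lra |];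
                 rewrite peval_mul, ?Eab, ?Ebc, ?Eca; ring).
  apply (ref_int_weighted_square_eq0 (affine 1 0 0));
    [intros; rewrite peval_affine; lra |].
  rewrite (ref_int_ext _ (pmul wd wd)) by (intros; rewrite !peval_mul, peval_affine; ring).
  lra.
Qed.

(** * The triangle [T] *)

Lemma ref_of_poly2 j a b c v0 : poly2 j v0 ->
  exists V0, deg_le j V0 /\
    forall s t, v0 (fst (tri_pt a b c s t)) (snd (tri_pt a b c s t)) = peval V0 s t.
Proof.
  intros Hv0. destruct (bipoly_of_poly2 j v0 Hv0) as [V [HV EV]].
  exists (to_ref a b c V). split; [apply deg_le_to_ref, HV |].
  intros s t. rewrite peval_to_ref. apply EV.
Qed.

(* On each edge the trace of [vb] is written as a polynomial in reference coordinates: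
   [Gbc (s, t) = Lbc t] and [Gca (s, t) = Lca (1 - t)]. *)
Lemma ref_traces_of_bdry_poly n vb a b c : bdry_poly n vb a b c ->
  exists Gab Gbc Gca, deg_le n Gab /\ deg_le n Gbc /\ deg_le n Gca /\
    (forall t, 0 <= t <= 1 -> vb (fst (lerp a b t)) (snd (lerp a b t)) = peval Gab t 0) /\
    (forall t, 0 <= t <= 1 -> vb (fst (lerp b c t)) (snd (lerp b c t)) = peval Gbc (1 - t) t) /\
    (forall t, 0 <= t <= 1 -> vb (fst (lerp c a t)) (snd (lerp c a t)) = peval Gca 0 (1 - t)).
Proof.
  intros [Pab [Pbc Pca]].
  destruct (bipoly_of_poly1 _ _ Pab) as [Lab [HLab Eab]].
  destruct (bipoly_of_poly1 _ _ Pbc) as [Lbc [HLbc Ebc]].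
  destruct (bipoly_of_poly1 _ _ Pca) as [Lca [HLca Eca]].
  exists Lab, (pcomp Lbc (affine 0 0 1) (affine 0 0 0)),
    (pcomp Lca (affine 1 0 (-1)) (affine 0 0 0)).
  repeat split; try (apply deg_le_comp; auto using deg_le_affine); try exact HLab.
  - exact Eab.
  - intros t Ht. rewrite peval_comp, !peval_affine, Ebc by exact Ht. f_equal; ring.
  - intros t Ht. rewrite peval_comp, !peval_affine, Eca by exact Ht. f_equal; ring.
Qed.

Lemma solve_2x2 p q r s u v :
  p * s - q * r <> 0 -> p * u + q * v = 0 -> r * u + s * v = 0 -> u = 0 /\ v = 0.
Proof.
  intros HD H1 H2. split; apply (Rmult_eq_reg_l (p * s - q * r)); try exact HD.
  - replace ((p * s - q * r) * u) with (s * (p * u + q * v) - q * (r * u + s * v)) by ring.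
    rewrite H1, H2. ring.
  - replace ((p * s - q * r) * v) with (p * (r * u + s * v) - r * (p * u + q * v)) by ring.
    rewrite H1, H2. ring.
Qed.

Section PhysicalTriangle.

Variables (a b c : pt) (j : nat) (v0 vb w1 w2 : R -> R -> R).
Variables (V0 W1 W2 Gab Gbc Gca : bipoly).
Hypothesis area_neq0 : area2 a b c <> 0.
Hypothesis weak_grad : is_weak_grad j a b c v0 vb w1 w2.
Hypothesis deg_V0 : deg_le j V0.
Hypothesis deg_W1 : deg_le (S j) W1.
Hypothesis deg_W2 : deg_le (S j) W2.
Hypothesis deg_Gab : deg_le (S j) Gab.
Hypothesis deg_Gbc : deg_le (S j) Gbc.
Hypothesis deg_Gca : deg_le (S j) Gca.
Hypothesis ref_V0 : forall s t, v0 (fst (tri_pt a b c s t)) (snd (tri_pt a b c s t)) = peval V0 s t.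
Hypothesis eval_W1 : forall x y, w1 x y = peval W1 x y.
Hypothesis eval_W2 : forall x y, w2 x y = peval W2 x y.
Hypothesis trace_ab :
  forall t, 0 <= t <= 1 -> vb (fst (lerp a b t)) (snd (lerp a b t)) = peval Gab t 0.
Hypothesis trace_bc :
  forall t, 0 <= t <= 1 -> vb (fst (lerp b c t)) (snd (lerp b c t)) = peval Gbc (1 - t) t.
Hypothesis trace_ca :
  forall t, 0 <= t <= 1 -> vb (fst (lerp c a t)) (snd (lerp c a t)) = peval Gca 0 (1 - t).

Lemma weak_grad_identity α β p : deg_le (S j) p ->
  ref_int (pmul (wdir a b c W1 W2 α β) p) + ref_int (pmul V0 (pdir α β p))
  = (α + β) * int_bc (pmul Gbc p) - β * int_ab (pmul Gab p) - α * int_ca (pmul Gca p).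
Proof. apply (weak_grad_identity_ref j a b c v0 vb w1 w2); assumption. Qed.

Lemma const_of_zero_weak_grad :
  (forall x y, in_tri a b c (x, y) -> w1 x y = 0 /\ w2 x y = 0) ->
  exists C, (forall x y, in_tri a b c (x, y) -> v0 x y = C) /\
            (forall x y, on_bdry a b c (x, y) -> vb x y = C).
Proof.
  intros Hw. destruct (ref_const_of_zero_weak_grad j V0 Gab Gbc Gca) as [C [HC HG]]; try assumption.
  { intros α β p Hp.
    rewrite <- (weak_grad_identity α β p Hp), (ref_int_zero (pmul (wdir a b c W1 W2 α β) p));
      [ring |].
    intros s t [Hs [Ht Hst]].
    destruct (Hw (fst (tri_pt a b c s t)) (snd (tri_pt a b c s t))) as [Z1 Z2].
    { exists s, t. repeat split; lra. }
    unfold wdir. rewrite eval_W1 in Z1. rewrite eval_W2 in Z2.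
    rewrite peval_mul, peval_to_ref, peval_app, !peval_scale, Z1, Z2. ring. }
  exists C. split.
  - intros x y [s [t [Hs [Ht [Hst Exy]]]]].
    replace x with (fst (tri_pt a b c s t)) by (rewrite <- Exy; reflexivity).
    replace y with (snd (tri_pt a b c s t)) by (rewrite <- Exy; reflexivity).
    rewrite ref_V0. apply HC. unfold in_ref; lra.
  - intros x y [[t [Ht Exy]] | [[t [Ht Exy]] | [t [Ht Exy]]]];
      [replace x with (fst (lerp a b t)) by (rewrite <- Exy; reflexivity);
       replace y with (snd (lerp a b t)) by (rewrite <- Exy; reflexivity);
       rewrite trace_ab by exact Ht
      |replace x with (fst (lerp b c t)) by (rewrite <- Exy; reflexivity);
       replace y with (snd (lerp b c t)) by (rewrite <- Exy; reflexivity);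
       rewrite trace_bc by exact Ht
      |replace x with (fst (lerp c a t)) by (rewrite <- Exy; reflexivity);
       replace y with (snd (lerp c a t)) by (rewrite <- Exy; reflexivity);
       rewrite trace_ca by exact Ht];
      apply HG, Ht.
Qed.

Lemma zero_weak_grad_of_const C :
  (forall x y, in_tri a b c (x, y) -> v0 x y = C) ->
  (forall x y, on_bdry a b c (x, y) -> vb x y = C) ->
  forall x y, in_tri a b c (x, y) -> w1 x y = 0 /\ w2 x y = 0.
Proof.
  intros Hv0 Hvb x y [s [t [Hs [Ht [Hst Exy]]]]].
  replace x with (fst (tri_pt a b c s t)) by (rewrite <- Exy; reflexivity).
  replace y with (snd (tri_pt a b c s t)) by (rewrite <- Exy; reflexivity).
  assert (Hwd : forall α β, peval (wdir a b c W1 W2 α β) s t = 0).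
  { intros α β. apply (ref_zero_weak_grad_of_const j α β V0 Gab Gbc Gca _ C).
    - apply deg_le_to_ref, deg_le_app; apply deg_le_scale; assumption.
    - intros s' t' [Hs' [Ht' Hst']]. rewrite <- ref_V0. apply Hv0.
      exists s', t'. repeat split; lra.
    - intros t' Ht'. rewrite <- trace_ab, <- trace_bc, <- trace_ca by exact Ht'.
      repeat split; apply Hvb; [left | right; left | right; right];
        exists t'; (split; [exact Ht' | symmetry; apply surjective_pairing]).
    - intros p Hp. apply weak_grad_identity, Hp.
    - unfold in_ref; lra. }
  pose proof (Hwd 1 0) as E1. pose proof (Hwd 0 1) as E2.
  unfold wdir, tangent in E1, E2. rewrite peval_to_ref, peval_app, !peval_scale in E1, E2.
  cbn [fst snd] in E1, E2.
  rewrite eval_W1, eval_W2.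
  apply (solve_2x2 (fst b - fst a) (snd b - snd a) (fst c - fst a) (snd c - snd a)).
  - exact area_neq0.
  - etransitivity; [| exact E1]; ring.
  - etransitivity; [| exact E2]; ring.
Qed.

End PhysicalTriangle.

Theorem lemma5p1 (a b c : pt) (j : nat) (v0 vb w1 w2 : R -> R -> R) :
  nondegenerate a b c ->
  poly2 j v0 ->
  bdry_poly (S j) vb a b c ->
  is_weak_grad j a b c v0 vb w1 w2 ->
  ((forall x y, in_tri a b c (x, y) -> w1 x y = 0 /\ w2 x y = 0) <->
   exists C : R, (forall x y, in_tri a b c (x, y) -> v0 x y = C) /\
                 (forall x y, on_bdry a b c (x, y) -> vb x y = C)).
Proof.
  intros HD Hv0 Hvb Hwg.
  destruct (ref_of_poly2 j a b c v0 Hv0) as [V0 [HV0 EV0]].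
  destruct (ref_traces_of_bdry_poly _ _ _ _ _ Hvb)
    as [Gab [Gbc [Gca [Hab [Hbc [Hca [Tab [Tbc Tca]]]]]]]].
  destruct (bipoly_of_poly2 _ _ (proj1 Hwg)) as [W1 [HW1 EW1]].
  destruct (bipoly_of_poly2 _ _ (proj1 (proj2 Hwg))) as [W2 [HW2 EW2]].
  split.
  - apply (const_of_zero_weak_grad a b c j v0 vb w1 w2 V0 W1 W2 Gab Gbc Gca); assumption.
  - intros [C [HvC HbC]].
    apply (zero_weak_grad_of_const a b c j v0 vb w1 w2 V0 W1 W2 Gab Gbc Gca) with (C := C);
      assumption.
Qed.
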